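(* Let $P,Q$ be probability measures on $\mathbb{R}^d$. For a probability measure $P$ define $\Lambda_P(v)=\log\int e^{v\cdot y}P(dy)\in(-\infty,\infty]$ and $I_P(x)=\sup_{v\in\mathbb{R}^d}\{v\cdot x-\Lambda_P(v)\}$ (and similarly $\Lambda_Q$, $I_Q$). Then for every $x\in\mathbb{R}^d$, $$\sup_{c>1}\Big\{\frac1cI_P(x)-\frac1{c-1}R_{c/(c-1)}(Q\|P)\Big\}\le I_Q(x)\le\inf_{0<c<1}\Big\{\frac1cI_P(x)+\frac1{1-c}R_{1/(1-c)}(P\|Q)\Big\},$$ with the convention $\infty-\infty=-\infty$ in the lower bound.
   Context: Rényi divergence: let $\nu$ be a $\sigma$-finite positive measure with $dP=p\,d\nu$, $dQ=q\,d\nu$. For $\alpha\in(0,1)$, $R_\alpha(Q\|P)=\frac{1}{\alpha(\alpha-1)}\log\int_{p>0}q^\alpha p^{1-\alpha}\,d\nu$; for $\alpha>1$, the same formula if $Q\ll P$ and $R_\alpha(Q\|P)=+\infty$ if $Q\not\ll P$. *)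

(* R^d is modelled as [d.-tuple R] with its canonical
   product (= Borel) sigma-algebra from measurable_structure.v. *)
From HB Require Import structures.
From mathcomp Require Import all_boot all_order all_algebra.
From mathcomp Require Import all_classical all_reals all_analysis.
Set Implicit Arguments. Unset Strict Implicit. Unset Printing Implicit Defensive.
Import Order.TTheory GRing.Theory Num.Theory.
Local Open Scope classical_set_scope.
Local Open Scope ring_scope.

Section Defs.
Context {R : realType} {d : nat}.
Notation Rd := (d.-tuple R).

Definition dotR (v y : Rd) : R := \sum_(i < d) tnth v i * tnth y i.

Definition logMGF (P : probability Rd R) (v : Rd) : \bar R :=
  lne (\int[P]_(y in [set: Rd]) (expR (dotR v y))%:E)%E.

Definition rate (P : probability Rd R) (x : Rd) : \bar R :=
  ereal_sup [set ((dotR v x)%:E - logMGF P v)%E | v in [set: Rd]].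

Definition is_density (nu : {measure set Rd -> \bar R}) (P : probability Rd R)
    (p : Rd -> R) : Prop :=
  [/\ measurable_fun [set: Rd] p, (forall y, 0 <= p y) &
      forall A, measurable A -> P A = (\int[nu]_(y in A) (p y)%:E)%E].

(* Renyi divergence R_alpha(Q||P) computed from densities q = dQ/dnu, p = dP/dnu,
   with the 1/(alpha(alpha-1)) normalisation of the paper; for alpha > 1 it is
   +oo unless Q << P.  (Only alpha in (0,1) u (1,oo) is meaningful.) *)
Definition renyi (nu : {measure set Rd -> \bar R}) (Q P : probability Rd R)
    (q p : Rd -> R) (a : R) : \bar R :=
  let val := (((a * (a - 1))^-1)%:E *
     lne (\int[nu]_(y in [set y | (0 < p y)%R]) ((q y) `^ a * (p y) `^ (1 - a))%R%:E))%E in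
  if (1 < a) then (if `[< (Q `<< P) >] then val else +oo%E) else val.

End Defs.

From HB Require Import structures.
From mathcomp Require Import all_boot all_order all_algebra.
From mathcomp Require Import all_classical all_reals all_analysis.
From mathcomp Require Import measurable_realfun ring.
Import Order.TTheory GRing.Theory Num.Theory.
Local Open Scope classical_set_scope.
Local Open Scope ring_scope.

(* For 0 < c < 1 and a = 1/(1-c), Hoelder's inequality with exponents a and 1/c
   applied to e^{c v.y} p = (p q^-c) (q^c e^{c v.y}) on {q > 0} gives, when P << Q,
     Lambda_P(c v) <= c Lambda_Q(v) + (1-c) log \int_{q>0} p^a q^(1-a) dnu.
   Taking Legendre transforms turns this into
     I_Q <= I_P / c + ((1-c)/c) log \int_{q>0} p^a q^(1-a) dnu,
   which is the upper bound.  The lower bound is the same inequality with P and Q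
   exchanged and c replaced by 1/c. *)

Section integral_density.
Context d (T : measurableType d) (R : realType).
Variables (nu : {measure set T -> \bar R}) (P : {measure set T -> \bar R}).
Variable p : T -> R.
Hypothesis mp : measurable_fun [set: T] p.
Hypothesis p_ge0 : forall x, 0 <= p x.
Hypothesis Pp : forall A, measurable A -> P A = (\int[nu]_(y in A) (p y)%:E)%E.
Local Open Scope ereal_scope.
Import HBNNSimple.

Lemma integral_density_nnsfun (h : {nnsfun T >-> R}) E : measurable E ->
  \int[nu]_(x in E) ((h x)%:E * (p x)%:E) = \int[P]_(x in E) (h x)%:E.
Proof.
move=> mE.
have hE x : (h x)%:E = \sum_(r \in range h) (r * \1_(h @^-1` [set r]) x)%:E.
  by rewrite fsumEFin// -fimfunE.
have r_ge0 r : r \in range h -> (0 <= r)%R.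
  by rewrite inE => -[t _ <-].
have mh r : measurable_fun E (fun x => (r * \1_(h @^-1` [set r]) x)%R%:E).
  by apply/measurable_EFinP/measurable_funM.
under eq_integral => x _.
  rewrite hE ge0_mule_fsuml; last by move=> r; exact: nnfun_muleindic_ge0.
  over.
rewrite ge0_integral_fsum//; last 2 first.
- by move=> r; apply: emeasurable_funM => //; exact/measurable_EFinP/measurable_funTS.
- by move=> r x _; rewrite mule_ge0 ?nnfun_muleindic_ge0 ?lee_fin.
under [RHS]eq_integral do rewrite hE.
rewrite ge0_integral_fsum//; last by move=> r x _; exact: nnfun_muleindic_ge0.
apply: eq_fsbigr => r /r_ge0 r0; rewrite integralZl_indic_nnsfun// integral_indic//.
under eq_integral do rewrite EFinM -muleA.
rewrite ge0_integralZl//; last 2 first.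
- by apply: emeasurable_funM; exact/measurable_EFinP/measurable_funTS.
- by move=> x _; rewrite mule_ge0 ?lee_fin.
rewrite (eq_integral ((EFin \o p) \_ (h @^-1` [set r]))); last first.
  by move=> x _; rewrite epatch_indic muleC.
by rewrite -integral_mkcondr setIC Pp//; exact: measurableI.
Qed.

Lemma integral_density (f : T -> \bar R) E : measurable E ->
  measurable_fun E f -> (forall x, 0 <= f x) ->
  \int[nu]_(x in E) (f x * (p x)%:E) = \int[P]_(x in E) f x.
Proof.
move=> mE mf f0; pose h := nnsfun_approx mE mf.
have h_cvg x : E x -> (EFin \o h ^~ x) @ \oo --> f x.
  by move=> Ex; exact: cvg_nnsfun_approx.
have h_nd x : {homo (fun n => (h n x)%:E) : m n / (m <= n)%N >-> m <= n}.
  by move=> m n mn; rewrite lee_fin; exact/lefP/nd_nnsfun_approx.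
have mhn n : measurable_fun E (EFin \o h n).
  exact/measurable_EFinP/measurable_funTS.
have P_lim : \int[P]_(x in E) f x = limn (fun n => \int[P]_(x in E) (h n x)%:E).
  rewrite -monotone_convergence//.
  - by apply: eq_integral => x /[!inE] Ex; apply/esym/cvg_lim => //; exact: h_cvg.
  - by move=> n x _; rewrite lee_fin.
have nu_lim : \int[nu]_(x in E) (f x * (p x)%:E) =
    limn (fun n => \int[nu]_(x in E) ((h n x)%:E * (p x)%:E)).
  rewrite -monotone_convergence//.
  - apply: eq_integral => x /[!inE] Ex; apply/esym/cvg_lim => //.
    by apply: cvgeZr => //; exact: h_cvg.
  - by move=> n; apply: emeasurable_funM => //; exact/measurable_EFinP/measurable_funTS.
  - by move=> n x _; rewrite mule_ge0 ?lee_fin.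
  - by move=> x _ m n mn; rewrite lee_wpmul2r ?lee_fin//; exact: h_nd.
rewrite P_lim nu_lim; congr (limn _); apply/funext => n.
exact: integral_density_nnsfun.
Qed.

End integral_density.
Arguments integral_density {d T R nu P p}.

Lemma measurable_gt0 d (T : measurableType d) (R : realType) (f : T -> R) :
  measurable_fun [set: T] f -> measurable [set y | 0 < f y].
Proof.
move=> mf; rewrite -[X in measurable X]setTI -preimage_itvoy.
exact: mf (measurable_itv _).
Qed.

Section moment_generating_function.
Context {R : realType} {d : nat}.
Local Notation Rd := (d.-tuple R).
Implicit Types (P Q : probability Rd R) (u v x y : Rd).

Definition tscale (c : R) v : Rd := [tuple c * tnth v i | i < d].

Lemma dotR_tscale c v y : dotR (tscale c v) y = c * dotR v y.
Proof.
rewrite /dotR big_distrr; apply: eq_bigr => i _ /=.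
by rewrite /tscale tnth_mktuple mulrA.
Qed.

Lemma tscaleA c c' v : tscale c (tscale c' v) = tscale (c * c') v.
Proof. by apply: eq_from_tnth => i; rewrite /tscale !tnth_mktuple mulrA. Qed.

Lemma measurable_dotR v : measurable_fun [set: Rd] (dotR v).
Proof.
apply: measurable_sum => i.
by apply: measurable_funM => //; exact: measurable_tnth.
Qed.

Lemma measurable_expR_dotR v :
  measurable_fun [set: Rd] (fun y => (expR (dotR v y))%:E).
Proof.
by apply/measurable_EFinP; apply: measurableT_comp => //; exact: measurable_dotR.
Qed.

Local Open Scope ereal_scope.

Definition mgf P v : \bar R := \int[P]_(y in [set: Rd]) (expR (dotR v y))%:E.

Lemma logMGFE P v : logMGF P v = lne (mgf P v).
Proof. by []. Qed.

Lemma mgf_gt0 P v : 0 < mgf P v.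
Proof.
rewrite lt0e integral_ge0 ?andbT => [|y _]; last by rewrite lee_fin expR_ge0.
apply/eqP => mgf0.
have : \int[P]_(y in [set: Rd]) `|(expR (dotR v y))%:E| = 0.
  by rewrite -mgf0; apply: eq_integral => y _; rewrite gee0_abs// lee_fin expR_ge0.
move/(ae_eq_integral_abs P measurableT (measurable_expR_dotR v)) => [N [mN PN0 sub]].
have : P [set: Rd] <= P N.
  apply: le_measure; rewrite ?inE// => y _; apply: sub => /(_ I) /eqP.
  by rewrite eqe gt_eqF// expR_gt0.
by rewrite probability_setT PN0 lee_fin ler10.
Qed.

Lemma mgf_tscale0 P v : mgf P (tscale 0 v) = 1.
Proof.
rewrite /mgf; under eq_integral do rewrite dotR_tscale mul0r expR0.
by rewrite integral_cst// mul1e; exact: probability_setT.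
Qed.

Lemma logMGF_gtNy P v : -oo < logMGF P v.
Proof.
rewrite logMGFE; have := mgf_gt0 P v.
by case: (mgf P v) => [m m0||] //; rewrite lne_EFin ?ltNyr// -lte_fin.
Qed.

Lemma le_rate P x v : (dotR v x)%:E - logMGF P v <= rate P x.
Proof. by apply: ereal_sup_ubound; exists v. Qed.

Lemma rate_ge0 P x : 0 <= rate P x.
Proof.
have := le_rate P x (tscale 0 x).
by rewrite logMGFE mgf_tscale0 lne1 dotR_tscale mul0r sube0.
Qed.

Lemma rate_le_of_logMGF_le {P Q} {c k : R} : (0 < c)%R ->
    (forall v, logMGF P (tscale c v) <= c%:E * logMGF Q v + k%:E) ->
  forall x, rate Q x <= c^-1%:E * rate P x + (c^-1 * k)%:E.
Proof.
move=> c0 PQ x; apply: ge_ereal_sup => _ [v _ <-].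
have := PQ v; have := logMGF_gtNy Q v.
case: (logMGF Q v) => [l| |] // _; last by rewrite addeNy leNye.
rewrite -EFinM -EFinD.
have := logMGF_gtNy P (tscale c v); have := le_rate P x (tscale c v).
case: (logMGF P (tscale c v)) => [l' rPl' _|_ _|//]; last by rewrite leNgt ltry.
rewrite lee_fin => Pl'.
apply: le_trans
  (_ : c^-1%:E * ((dotR (tscale c v) x)%:E - l'%:E) + (c^-1 * k)%:E <= _); last first.
  by rewrite leeD2r//; apply: lee_wpmul2l => //; rewrite lee_fin invr_ge0 ltW.
rewrite -EFinB -EFinM -EFinD lee_fin dotR_tscale.
rewrite (_ : c^-1 * (c * dotR v x - l') + c^-1 * k =
  dotR v x - l + (c * l + k - l') / c)%R.
  by rewrite lerDl divr_ge0 ?subr_ge0// ltW.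
by field; rewrite gt_eqF.
Qed.

End moment_generating_function.

Section renyi_bounds.
Context {R : realType} {d : nat}.
Local Notation Rd := (d.-tuple R).
Variable nu : {measure set Rd -> \bar R}.
Local Open Scope ereal_scope.

Definition renyi_integral (q p : Rd -> R) (a : R) : \bar R :=
  \int[nu]_(y in [set y | (0 < p y)%R]) ((q y) `^ a * (p y) `^ (1 - a))%:E.

Lemma renyi_integral_ge0 q p a : 0 <= renyi_integral q p a.
Proof. by apply: integral_ge0 => y _; rewrite lee_fin mulr_ge0 ?powR_ge0. Qed.

Lemma renyi_dominated (Q P : probability Rd R) q p (a : R) : (1 < a)%R ->
  Q `<< P -> renyi nu Q P q p a = ((a * (a - 1))^-1)%:E * lne (renyi_integral q p a).
Proof. by move=> a1 QP; rewrite /renyi a1 asboolT. Qed.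

Lemma renyi_not_dominated (Q P : probability Rd R) q p (a : R) : (1 < a)%R ->
  ~ Q `<< P -> renyi nu Q P q p a = +oo.
Proof. by move=> a1 QP; rewrite /renyi a1 asboolF. Qed.

Lemma dominated_density_compl_null (P Q : probability Rd R) q :
  is_density nu Q q -> P `<< Q -> P (~` [set y | (0 < q y)%R]) = 0.
Proof.
case=> mq q0 hQ /null_content_dominatesP; apply.
  exact/measurableC/measurable_gt0.
transitivity (\int[nu]_(y in ~` [set y | (0 < q y)%R]) (q y)%:E).
  exact/hQ/measurableC/measurable_gt0.
apply: integral0_eq => y /= /negP; rewrite -leNgt => qy.
by apply/eqP; rewrite eqe eq_le qy q0.
Qed.

Section hoelder_mgf.
Variables (P Q : probability Rd R) (p q : Rd -> R).
Hypotheses (hp : is_density nu P p) (hq : is_density nu Q q) (PQ : P `<< Q).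
Variable c : R.
Hypotheses (c0 : (0 < c)%R) (c1 : (c < 1)%R).

Let S := [set y | (0 < q y)%R].
Let mq : measurable_fun [set: Rd] q. Proof. by case: hq. Qed.
Let q_ge0 y : (0 <= q y)%R. Proof. by case: hq. Qed.
Let p_ge0 y : (0 <= p y)%R. Proof. by case: hp. Qed.
Let mS : measurable S. Proof. exact: measurable_gt0. Qed.
Let q_notS y : ~ S y -> q y = 0%R.
Proof. by move=> /negP; rewrite -leNgt => qy; apply/eqP; rewrite eq_le qy q_ge0. Qed.

(* e^{c u.y} p = F * G u on {q > 0}, splitting the integrand for Hoelder. *)
Let F y := (p y * q y `^ (- c))%R.
Let G u y := (q y `^ c * expR (dotR (tscale c u) y))%R.

Let mF : measurable_fun [set: Rd] F.
Proof.
by apply: measurable_funM; [case: hp|exact: measurableT_comp (measurable_powR _) mq].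
Qed.

Let mG u : measurable_fun [set: Rd] (G u).
Proof.
apply: measurable_funM; first exact: measurableT_comp (measurable_powR _) mq.
by apply: measurableT_comp => //; exact: measurable_dotR.
Qed.

Lemma mgf_tscale_Lnorm1 u : mgf P (tscale c u) = 'N[nu]_1[EFin \o (F \* G u)%R].
Proof.
have [mp _ Pp] := hp.
rewrite /mgf (ge0_negligible_integral (measurableC mS))//; last 2 first.
- exact: measurable_expR_dotR.
- exact: dominated_density_compl_null hq PQ.
rewrite setTD setCK -(integral_density mp p_ge0 Pp) //; last first.
  by apply: measurable_funTS; exact: measurable_expR_dotR.
rewrite Lnorm1 integral_mkcond; apply: eq_integral => y _; rewrite patchE /F /G /=.
case: ifPn => [/[1!inE] Sy|Sy]; last first.
  have /q_notS -> : ~ S y by move/mem_set; exact/negP.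
  by rewrite !powR0 ?oppr_eq0 ?gt_eqF// mulr0 mul0r normr0.
rewrite powRN -EFinM ger0_norm ?mulr_ge0 ?invr_ge0 ?powR_ge0 ?expR_ge0//.
by congr EFin; field; rewrite gt_eqF ?powR_gt0.
Qed.

Lemma Lnorm_hoelder_left :
  'N[nu]_((1 - c)^-1)%R%:E[EFin \o F] = renyi_integral p q (1 - c)^-1%R `^ (1 - c)%R.
Proof.
set a := (1 - c)^-1%R.
have ca : (- c * a = 1 - a)%R by rewrite /a; field; rewrite subr_eq0 gt_eqF.
have a1 : (1 - a != 0)%R by rewrite -ca mulf_neq0 ?oppr_eq0 ?gt_eqF ?invr_gt0 ?subr_gt0.
rewrite unlock /= invrK; congr (_ `^ _).
rewrite /renyi_integral [RHS]integral_mkcond.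
apply: eq_integral => y _; rewrite patchE /F.
rewrite ger0_norm ?mulr_ge0 ?powR_ge0// powRM ?powR_ge0// -powRrM ca.
case: ifPn => // Sy; have /q_notS -> : ~ S y by move/mem_set; exact/negP.
by rewrite powR0 ?mulr0.
Qed.

Lemma Lnorm_hoelder_right u : 'N[nu]_(c^-1)%R%:E[EFin \o G u] = mgf Q u `^ c.
Proof.
have [_ _ Qq] := hq.
have Gc y : (`|G u y| `^ c^-1 = expR (dotR u y) * q y)%R.
  rewrite ger0_norm ?mulr_ge0 ?powR_ge0 ?expR_ge0// powRM ?powR_ge0 ?expR_ge0//.
  rewrite -powRrM mulfV ?gt_eqF// powRr1// -expRM dotR_tscale mulrAC mulfV ?gt_eqF//.
  by rewrite mul1r mulrC.
rewrite unlock /= invrK; congr (_ `^ _).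
under eq_integral do rewrite Gc EFinM.
by rewrite (integral_density mq q_ge0 Qq)//; exact: measurable_expR_dotR.
Qed.

Lemma mgf_hoelder u :
  mgf P (tscale c u) <= renyi_integral p q (1 - c)^-1%R `^ (1 - c)%R * mgf Q u `^ c.
Proof.
rewrite mgf_tscale_Lnorm1 -Lnorm_hoelder_left -Lnorm_hoelder_right.
apply: hoelder => //; rewrite ?invr_gt0 ?subr_gt0// invrK invrK.
by rewrite subrK.
Qed.

Lemma renyi_integral_gt0 : 0 < renyi_integral p q (1 - c)^-1%R.
Proof.
(* Hoelder at u = 0 reads 1 <= J `^ (1 - c). *)
pose o : Rd := [tuple 0%R | _ < d].
have := mgf_hoelder (tscale 0%R o).
rewrite tscaleA mulr0 !mgf_tscale0 poweR1r mule1.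
rewrite lt0e renyi_integral_ge0 andbT; apply: contraTN => /eqP ->.
by rewrite poweR0r ?subr_eq0 ?gt_eqF// -ltNge lte01.
Qed.

Lemma logMGF_tscale_le u j : renyi_integral p q (1 - c)^-1%R = j%:E ->
  logMGF P (tscale c u) <= c%:E * logMGF Q u + ((1 - c) * ln j)%R%:E.
Proof.
move=> Jj; have j0 : (0 < j)%R by rewrite -lte_fin -Jj renyi_integral_gt0.
have := mgf_hoelder u; rewrite Jj !logMGFE poweR_EFin.
have := mgf_gt0 Q u; case: (mgf Q u) => [m m0| _|//]; last first.
  by rewrite /= gt0_muley ?lte_fin// addye ?leey.
rewrite poweR_EFin -EFinM => hoelder_u; rewrite lne_EFin -?lte_fin//.
apply: le_trans (_ : lne (j `^ (1 - c) * m `^ c)%R%:E <= _).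
  by rewrite lee_lne ?in_itv/= ?leey ?andbT ?lee_fin ?mulr_ge0 ?powR_ge0// ltW// mgf_gt0.
rewrite lne_EFin ?mulr_gt0 ?powR_gt0// -EFinM -EFinD lee_fin.
by rewrite lnM ?posrE ?powR_gt0// !ln_powR addrC.
Qed.

End hoelder_mgf.
Arguments renyi_integral_gt0 {P Q p q} hp hq PQ {c}.
Arguments logMGF_tscale_le {P Q p q} hp hq PQ {c}.

Lemma rate_le_renyi (P Q : probability Rd R) p q x (c : R) :
    is_density nu P p -> is_density nu Q q -> (0 < c)%R -> (c < 1)%R ->
  rate Q x <= (c^-1)%:E * rate P x + ((1 - c)^-1)%:E * renyi nu P Q p q (1 - c)^-1.
Proof.
move=> hp hq c0 c1; set a := ((1 - c)^-1)%R.
have a1 : (1 < a)%R by rewrite invf_gt1 ?subr_gt0// ltrBlDr ltrDl.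
have a0 : (0 < a)%R := lt_trans ltr01 a1.
have rate_le_y : rate Q x <= (c^-1)%:E * rate P x + +oo.
  rewrite addey ?leey// gt_eqF// (lt_le_trans ltNy0)// mule_ge0 ?rate_ge0//.
  by rewrite lee_fin invr_ge0 ltW.
have [PQ|nPQ] := pselect (P `<< Q); last first.
  by rewrite renyi_not_dominated// gt0_muley ?lte_fin.
rewrite renyi_dominated//.
have := renyi_integral_gt0 hp hq PQ c0 c1.
case EJ: (renyi_integral p q a) => [j||//] j0; last first.
  by rewrite /= !gt0_muley ?lte_fin ?invr_gt0 ?mulr_gt0 ?subr_gt0.
rewrite lne_EFin -?lte_fin// -!EFinM.
have := rate_le_of_logMGF_le c0 (fun v => logMGF_tscale_le hp hq PQ c0 c1 v _ EJ) x.
suff -> : (a * ((a * (a - 1))^-1 * ln j) = c^-1 * ((1 - c) * ln j))%R by [].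
by rewrite /a; field; rewrite !gt_eqF ?subr_gt0.
Qed.

Lemma renyi_le_rate (P Q : probability Rd R) p q x (c : R) :
    is_density nu P p -> is_density nu Q q -> (1 < c)%R ->
  (c^-1)%:E * rate P x - ((c - 1)^-1)%:E * renyi nu Q P q p (c / (c - 1)) <= rate Q x.
Proof.
move=> hp hq c1; have c0 : (0 < c)%R := lt_trans ltr01 c1.
have c'0 : (0 < c^-1)%R by rewrite invr_gt0.
have c'1 : (c^-1 < 1)%R by rewrite invf_lt1.
have -> : (c / (c - 1) = (1 - c^-1)^-1)%R by field; rewrite !gt_eqF ?subr_gt0.
set a := ((1 - c^-1)^-1)%R.
have a1 : (1 < a)%R by rewrite invf_gt1 ?subr_gt0// ltrBlDr ltrDl.
have [QP|nQP] := pselect (Q `<< P); last first.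
  by rewrite renyi_not_dominated// gt0_muley ?lte_fin ?invr_gt0 ?subr_gt0// addeNy leNye.
rewrite renyi_dominated//.
have := renyi_integral_gt0 hq hp QP c'0 c'1.
case EJ: (renyi_integral q p a) => [j||//] j0; last first.
  rewrite /= !gt0_muley ?lte_fin ?invr_gt0 ?mulr_gt0 ?subr_gt0 ?(lt_trans ltr01 a1)//.
  by rewrite addeNy leNye.
rewrite lne_EFin -?lte_fin// -!EFinM leeBlDr// lee_pdivrMl// muleDr ?fin_num_adde_defl//.
have := rate_le_of_logMGF_le c'0 (fun v => logMGF_tscale_le hq hp QP c'0 c'1 v _ EJ) x.
rewrite invrK => /le_trans; apply; apply: leeD => //=; rewrite lee_fin le_eqVlt.
apply/orP; left; apply/eqP; rewrite /a; field.
by rewrite (_ : c + -1 * (c - 1) = 1)%R ?oner_neq0 ?andbT ?gt_eqF ?subr_gt0//; ring.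
Qed.

End renyi_bounds.

Theorem mainTheorem15 (R : realType) (d : nat) (P Q : probability (d.-tuple R) R)
  (nu : {measure set (d.-tuple R) -> \bar R}) (p q : d.-tuple R -> R) :
  sigma_finite [set: d.-tuple R] nu ->
  is_density nu P p -> is_density nu Q q ->
  forall x : d.-tuple R,
    (ereal_sup [set ((c^-1)%R%:E * rate P x - ((c - 1)^-1)%R%:E * renyi nu Q P q p (c / (c - 1))%R)%E
                | c in [set c : R | (1 < c)%R]]
     <= rate Q x)%E /\
    (rate Q x <=
     ereal_inf [set ((c^-1)%R%:E * rate P x + ((1 - c)^-1)%R%:E * renyi nu P Q p q ((1 - c)^-1)%R)%E
                | c in [set c : R | (0 < c < 1)%R]])%E.
Proof.
move=> _ hp hq x; split.
- by apply: ge_ereal_sup => _ [c c1 <-]; exact: renyi_le_rate.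
- by apply: le_ereal_inf_tmp => _ [c /andP[c0 c1] <-]; exact: rate_le_renyi.
Qed.
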